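(* Let $n,k\in\mathbb{N}$ with $1\le k\le n-1$. The map sending a weakly decreasing $\alpha=(a_1,\dots,a_n)\in PF_{n,k}$ (i.e. $a_1\ge a_2\ge\dots\ge a_n$) to the lattice path from $(0,n)$ to $(n,0)$ whose $i$-th east step goes from $(i-1,a_i-1)$ to $(i,a_i-1)$ for each $1\le i\le n$ (consecutive east steps joined by south steps) is a bijection from the set of weakly decreasing $k$-Naples parking functions of length $n$ onto the set of $k$-lattice paths of length $2n$. Equivalently, a weakly decreasing $\alpha\in[n]^n$ lies in $PF_{n,k}$ if and only if $a_i\le \min(n,\,n+k+1-i)$ for all $1\le i\le n$.
   Context: For $n\in\mathbb{N}$ let $[n]=\{1,\dots,n\}$ and $PP_n=[n]^n$. For an integer $k\ge 0$, the $k$-Naples parking rule: there are $n$ spots numbered $1,\dots,n$ west to east, initially empty; cars $c_1,\dots,c_n$ arrive in order, car $c_i$ preferring spot $a_i$. If spot $a_i$ is empty, $c_i$ parks there. Otherwise $c_i$ checks spots $a_i-1,\dots,a_i-k$ in this order (skipping those $<1$) and parks in the first empty one; if all are occupied, it drives east and parks in the first empty spot numbered greater than $a_i$, failing to park if none exists. $PF_{n,k}$ is the set of $\alpha\in PP_n$ for which all cars park. A $k$-lattice path of length $2n$ is a lattice path from $(0,n)$ to $(n,0)$ consisting of $n$ unit east steps $(1,0)$ and $n$ unit south steps $(0,-1)$, whose first step is a south step (so every east step lies at height at most $n-1$), and which never goes strictly above the line $y=n-x+k$; equivalently, if its $i$-th east step is at height $h_i$, then $n-1\ge h_1\ge h_2\ge\dots\ge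 h_n\ge 0$ and $h_i\le n-i+k$ for all $i$. *)

From mathcomp Require Import all_boot.
Set Implicit Arguments. Unset Strict Implicit. Unset Printing Implicit Defensive.

(* A preference list alpha = (a_1,...,a_n) is a seq nat; spots are 1..n. *)

Fixpoint first_empty (l occ : seq nat) : option nat :=
  match l with
  | [::] => None
  | p :: l' => if p \notin occ then Some p else first_empty l' occ
  end.

(* k-Naples rule: a car preferring spot a checks a, then a-1, ..., a-k
   (skipping spots < 1), then a+1, ..., n.  None = fails to park. *)
Definition naples_spot (n k : nat) (occ : seq nat) (a : nat) : option nat :=
  first_empty (a :: [seq a - i | i <- iota 1 k & i < a] ++ iota a.+1 (n - a)) occ.

Fixpoint naples_park (n k : nat) (occ : seq nat) (s : seq nat) : option (seq nat) :=
  match s with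
  | [::] => Some occ
  | a :: s' =>
      match naples_spot n k occ a with
      | Some p => naples_park n k (p :: occ) s'
      | None => None
      end
  end.

Definition is_naples_pf (n k : nat) (s : seq nat) : bool :=
  [&& size s == n, all (fun a => 0 < a <= n) s & naples_park n k [::] s].

(* Lattice paths as step sequences: true = east (1,0), false = south (0,-1). *)
(* After the first j steps the position is (x_j, y_j) with
   x_j = #east steps, y_j = n - #south steps. *)
Definition is_k_lattice_path (n k : nat) (p : seq bool) : bool :=
  [&& size p == 2 * n, count id p == n, count negb p == n,
      head true p == false &
      (* never strictly above y = n - x + k, i.e. y_j + x_j <= n + k *)
      all (fun j => (n - count negb (take j p)) + count id (take j p) <= n + k)
          (iota 0 (2 * n).+1)].

(* The path whose i-th east step is at height a_i - 1, starting at height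
   [h], joined by south steps, ending at (n,0). *)
Fixpoint path_aux (h : nat) (s : seq nat) : seq bool :=
  match s with
  | [::] => nseq h false
  | a :: s' => nseq (h - a.-1) false ++ true :: path_aux a.-1 s'
  end.

Definition path_of_pf (n : nat) (s : seq nat) : seq bool := path_aux n s.

Definition weakly_decr (s : seq nat) : bool := sorted geq s.

From mathcomp Require Import all_boot zify.
Set Implicit Arguments. Unset Strict Implicit.

(* Write a weakly decreasing alpha = (a_0, ..., a_(n-1)) with 0-based indices.
   1. Parking.  A car preferring a searches the spots of [search_order n k a];
      these are exactly the spots of [max 1 (a-k), n] when a <= n.
      - If every remaining car satisfies a_i + (#occupied + i) <= n + k, the
        car's search interval is larger than the set of occupied spots, so it
        parks; by induction all cars park ([naples_park_of_bound]).
      - Conversely, every car with preference >= L + k parks in a spot >= L,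
        so at most n+1-L cars have such preferences ([naples_park_count]).
        For decreasing alpha the first i+1 preferences are >= a_i, which
        yields a_i + i <= n + k ([naples_pf_decrE]).
   2. Paths.  [heights] decodes a step sequence into the heights (+1) of its
      east steps and inverts [path_aux] on decreasing positive sequences; the
      prefix condition y + x <= n + k of a path amounts to the same bound
      a_i + i <= n + k on its east-step heights. *)

Lemma first_empty_Some l occ p :
  first_empty l occ = Some p -> p \in l /\ p \notin occ.
Proof.
elim: l => //= x l IHl; case: ifP => [x_free [<-]|_ /IHl [p_l p_free]].
  by rewrite mem_head.
by rewrite in_cons p_l orbT.
Qed.

Lemma first_empty_None l occ : first_empty l occ = None -> {subset l <= occ}.
Proof.
elim: l => //= x l IHl; case: ifP => // /negbFE x_occ /IHl l_occ y.
by rewrite in_cons => /predU1P [->|/l_occ].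
Qed.

Definition search_order (n k a : nat) : seq nat :=
  a :: [seq a - i | i <- iota 1 k & i < a] ++ iota a.+1 (n - a).

Lemma naples_spotE n k occ a :
  naples_spot n k occ a = first_empty (search_order n k a) occ.
Proof. by []. Qed.

Lemma mem_search_order n k a x : x \in search_order n k a ->
  [/\ a - k <= x, 0 < a -> 0 < x & a <= n -> x <= n].
Proof.
rewrite in_cons mem_cat => /predU1P [->|/orP []]; first by split; lia.
- case/mapP => i; rewrite mem_filter mem_iota => /and3P [? ? ?] ->; split; lia.
- rewrite mem_iota => /andP [? ?]; split; lia.
Qed.

Lemma search_order_covers n k a x :
  0 < x -> a - k <= x <= n -> a <= n -> x \in search_order n k a.
Proof.
move=> x_gt0 /andP [x_ge x_le] a_le; rewrite in_cons mem_cat.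
case: (ltngtP x a) => [x_lt|x_gt|->] //.
- apply/orP; right; apply/orP; left; apply/mapP; exists (a - x); last by lia.
  by rewrite mem_filter mem_iota; apply/and3P; split; lia.
- by apply/orP; right; apply/orP; right; rewrite mem_iota; lia.
Qed.

Definition valid_spots (n : nat) (occ : seq nat) : bool :=
  uniq occ && all (fun x => 0 < x <= n) occ.

Lemma valid_spots_park n k occ a p : valid_spots n occ -> 0 < a <= n ->
  naples_spot n k occ a = Some p -> valid_spots n (p :: occ).
Proof.
move=> /andP [occ_uniq occ_range] a_range.
rewrite naples_spotE => /first_empty_Some [p_search p_free].
have [_ p_gt0 p_le] := mem_search_order p_search.
by rewrite /valid_spots /= p_free occ_uniq occ_range p_gt0 ?p_le //; lia.
Qed.

Lemma naples_park_of_bound n k s occ :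
  valid_spots n occ -> all (fun a => 0 < a <= n) s -> size occ + size s <= n ->
  (forall i, i < size s -> nth 0 s i + (size occ + i) <= n + k) ->
  naples_park n k occ s.
Proof.
elim: s occ => //= a s IHs occ occ_valid /andP [a_range s_range] size_le bound.
case E: (naples_spot n k occ a) => [p|].
  apply: IHs (valid_spots_park occ_valid a_range E) s_range _ _ => /=.
    by lia.
  by move=> i i_lt; have := bound i.+1 i_lt; rewrite /=; lia.
(* A failed search would need all of [max 1 (a-k), n] to be occupied. *)
have /andP [_ occ_range] := occ_valid.
have all_occ := first_empty_None E.
pose lo := maxn 1 (a - k).
have : size (iota lo (n.+1 - lo)) <= size occ.
  apply: uniq_leq_size; first exact: iota_uniq.
  by move=> x; rewrite mem_iota => x_range; apply: all_occ;
    apply: search_order_covers; lia.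
by rewrite size_iota /lo; have := bound 0 erefl; rewrite /=; lia.
Qed.

Lemma count_valid_spots_ge n L occ :
  valid_spots n occ -> count (fun x => L <= x) occ <= n.+1 - L.
Proof.
move=> /andP [occ_uniq occ_range]; rewrite -size_filter -(size_iota L (n.+1 - L)).
apply: uniq_leq_size; first by rewrite filter_uniq.
move=> x; rewrite mem_filter mem_iota => /andP [x_ge x_occ].
by have := allP occ_range x x_occ; lia.
Qed.

(* Necessity: a car preferring a >= L + k inspects only spots >= L, so if all
   cars park, the cars with such preferences (together with the spots >= L
   already occupied) fit into the n + 1 - L spots of [L, n]. *)
Lemma naples_park_count n k s occ occ' L :
  naples_park n k occ s = Some occ' ->
  valid_spots n occ -> all (fun a => 0 < a <= n) s ->
  count (fun x => L <= x) occ + count (fun a => L + k <= a) s <= n.+1 - L.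
Proof.
elim: s occ => [|a s IHs] occ /= park_ok occ_valid.
  by rewrite addn0 count_valid_spots_ge.
case E: (naples_spot n k occ a) park_ok => [p|] // park_ok /andP [a_range s_range].
have := IHs _ park_ok (valid_spots_park occ_valid a_range E) s_range.
move: E; rewrite naples_spotE => /first_empty_Some [/mem_search_order [p_ge _ _] _].
rewrite /=; case: (leqP (L + k) a); case: (leqP L p); lia.
Qed.

Lemma geq_trans : transitive geq.
Proof. exact: rev_trans leq_trans. Qed.

Lemma count_ge_nth_decr s i : sorted geq s -> i < size s ->
  i.+1 <= count (fun a => nth 0 s i <= a) s.
Proof.
move=> s_decr i_lt; rewrite -[X in count _ X](cat_take_drop i.+1 s) count_cat.
have size_take_i : size (take i.+1 s) = i.+1 by rewrite size_takel.
have all_ge : all (fun a => nth 0 s i <= a) (take i.+1 s).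
  apply/(all_nthP 0) => j; rewrite size_take_i => j_lt; rewrite nth_take //.
  by apply: (sorted_leq_nth geq_trans leqnn) => //; rewrite inE; lia.
by move: all_ge; rewrite all_count size_take_i => /eqP ->; rewrite leq_addr.
Qed.

Lemma naples_pf_decrE n k s :
  size s = n -> all (fun a => 0 < a <= n) s -> sorted geq s ->
  is_naples_pf n k s <-> (forall i, i < n -> nth 0 s i + i <= n + k).
Proof.
move=> size_s s_range s_decr.
rewrite /is_naples_pf size_s eqxx s_range /=; split; last first.
  by move=> bound; apply: naples_park_of_bound; rewrite ?size_s.
case E: (naples_park n k [::] s) => [occ|] // _ i i_lt.
rewrite leqNgt; apply/negP => too_big.
have := naples_park_count (n.+1 - i) E isT s_range.
have := @count_ge_nth_decr s i s_decr; rewrite size_s => /(_ i_lt).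
have ge_ai_big : subpred (fun a => nth 0 s i <= a) (fun a => n.+1 - i + k <= a).
  by move=> a /=; lia.
have := sub_count ge_ai_big s; rewrite /=; lia.
Qed.

Fixpoint heights (h : nat) (p : seq bool) : seq nat :=
  match p with
  | [::] => [::]
  | true :: p' => h.+1 :: heights h p'
  | false :: p' => heights h.-1 p'
  end.

Lemma heights_nseq_false h m p : heights h (nseq m false ++ p) = heights (h - m) p.
Proof. by elim: m h => [|m IHm] h /=; rewrite ?subn0 // IHm; congr heights; lia. Qed.

Lemma size_heights h p : size (heights h p) = count id p.
Proof. by elim: p h => [|[] p IHp] h //=; rewrite IHp. Qed.

Lemma heights_pos h p : all (fun a => 0 < a) (heights h p).
Proof. by elim: p h => [|[] p IHp] h //=; rewrite IHp. Qed.

Lemma heights_decr h p : path geq h.+1 (heights h p).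
Proof.
elim: p h => [|[] p IHp] h //=; first by rewrite leqnn IHp.
by case: h => [|h]; [exact: IHp | exact: path_le geq_trans _ _ _ (leqnSn _) (IHp h)].
Qed.

Lemma heights_path_aux h s :
  all (fun a => 0 < a) s -> path geq h.+1 s -> heights h (path_aux h s) = s.
Proof.
elim: s h => [|a s IHs] h /=.
  by move=> _ _; rewrite -[nseq h false]cats0 heights_nseq_false.
move=> /andP [a_gt0 s_pos] /andP [a_le s_decr]; rewrite heights_nseq_false.
have -> : h - (h - a.-1) = a.-1 by lia.
by rewrite /= prednK // IHs ?prednK.
Qed.

Lemma path_aux_succ h s :
  path geq h.+1 s -> path_aux h.+1 s = false :: path_aux h s.
Proof.
by case: s => [|a s] //= /andP [a_le _]; have -> : h.+1 - a.-1 = (h - a.-1).+1 by lia.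
Qed.

Lemma path_aux_heights h p : count negb p = h -> path_aux h (heights h p) = p.
Proof.
elim: p h => [|[] p IHp] h /=; first by move <-.
  by move=> south_p; rewrite subnn /= IHp.
by case: h => [|h] // [south_p]; rewrite path_aux_succ ?heights_decr // IHp.
Qed.

Lemma count_path_aux h s : all (fun a => 0 < a) s -> path geq h.+1 s ->
  [/\ count id (path_aux h s) = size s, count negb (path_aux h s) = h &
      size (path_aux h s) = h + size s].
Proof.
have east_nseq m : count id (nseq m false) = 0 by elim: m.
have south_nseq m : count negb (nseq m false) = m by elim: m => //= m ->.
elim: s h => [|a s IHs] h /=.
  by move=> _ _; rewrite east_nseq south_nseq size_nseq addn0.
move=> /andP [a_gt0 s_pos] /andP [a_le s_decr].
have := IHs a.-1 s_pos; rewrite prednK // => /(_ s_decr) [east south size_p].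
rewrite !count_cat size_cat /= east_nseq south_nseq east south size_p size_nseq.
by split; lia.
Qed.

Lemma heights_bound_of_prefix p y x B :
  (forall j, y - count negb (take j p) + (x + count id (take j p)) <= B) ->
  forall i, i < size (heights y p) -> nth 0 (heights y p) i + i + x <= B.
Proof.
elim: p y x => [|[] p IHp] y x //= prefix_ok.
  case=> [|i] /= i_lt; first by have := prefix_ok 1; rewrite /= take0 /=; lia.
  suff : nth 0 (heights y p) i + i + x.+1 <= B by lia.
  apply: IHp i_lt => j; have := prefix_ok j.+1; rewrite /=; lia.
move=> i i_lt; apply: IHp i_lt => j; have := prefix_ok j.+1; rewrite /=; lia.
Qed.

Lemma prefix_bound_of_heights p y x B : y + x <= B ->
  (forall i, i < size (heights y p) -> nth 0 (heights y p) i + i + x <= B) ->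
  forall j, y - count negb (take j p) + (x + count id (take j p)) <= B.
Proof.
elim: p y x => [|[] p IHp] y x /= start_ok heights_ok [|j] /=;
  rewrite ?addn0 ?subn0 //.
  have start_ok' : y + x.+1 <= B by have := heights_ok 0 erefl; rewrite /=; lia.
  suff : y - count negb (take j p) + (x.+1 + count id (take j p)) <= B by lia.
  by apply: IHp => // i i_lt; have := heights_ok i.+1 i_lt; rewrite /=; lia.
by have := IHp y.-1 x _ heights_ok j; lia.
Qed.

Lemma k_lattice_path_prefix n k p : is_k_lattice_path n k p ->
  forall j, n - count negb (take j p) + count id (take j p) <= n + k.
Proof.
move=> /and5P [/eqP size_p _ _ _ /allP prefix_ok] j.
have [j_le|j_gt] := leqP j (2 * n); first by apply: prefix_ok; rewrite mem_iota.
rewrite take_oversize; last by rewrite size_p ltnW.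
have := prefix_ok (2 * n); rewrite take_oversize ?size_p //.
by apply; rewrite mem_iota; lia.
Qed.

Lemma naples_pf_decr_shape n k s : weakly_decr s -> is_naples_pf n k s ->
  [/\ size s = n, all (fun a => 0 < a <= n) s, all (fun a => 0 < a) s &
      path geq n.+1 s].
Proof.
move=> s_decr /and3P [/eqP size_s s_range _]; split => //.
  by apply/allP => a /(allP s_range) /andP [].
case: s s_decr s_range {size_s} => //= a s -> /andP [/andP [_ a_le] _].
by rewrite andbT ltnW.
Qed.

Lemma path_of_pf_k_lattice_path n k s : 0 < n ->
  weakly_decr s -> is_naples_pf n k s -> is_k_lattice_path n k (path_of_pf n s).
Proof.
move=> n_gt0 s_decr s_pf.
have [size_s s_range s_pos s_bounded] := naples_pf_decr_shape s_decr s_pf.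
have heights_ok := (naples_pf_decrE k size_s s_range s_decr).1 s_pf.
have [east south size_p] := count_path_aux s_pos s_bounded.
rewrite /path_of_pf /is_k_lattice_path; apply/and5P; split.
- by rewrite size_p size_s addnn -mul2n.
- by rewrite east size_s.
- by rewrite south.
- case: s size_s s_range {s_decr s_pf s_pos s_bounded heights_ok east south size_p}
    => [|a s] /=; first lia.
  by move=> _ /andP [/andP [_ a_le] _]; have -> : n - a.-1 = (n - a.-1).-1.+1 by lia.
- apply/allP => j _; apply: (@prefix_bound_of_heights _ n 0 (n + k)); first lia.
  by rewrite heights_path_aux // size_s => i i_lt; rewrite addn0 heights_ok.
Qed.

Lemma path_of_pf_inj n k s t :
  weakly_decr s -> is_naples_pf n k s -> weakly_decr t -> is_naples_pf n k t ->
  path_of_pf n s = path_of_pf n t -> s = t.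
Proof.
rewrite /path_of_pf => s_decr s_pf t_decr t_pf same_path.
have [_ _ s_pos s_bounded] := naples_pf_decr_shape s_decr s_pf.
have [_ _ t_pos t_bounded] := naples_pf_decr_shape t_decr t_pf.
by rewrite -(heights_path_aux s_pos s_bounded) same_path heights_path_aux.
Qed.

Lemma path_of_pf_onto n k p : is_k_lattice_path n k p ->
  exists2 s, weakly_decr s && is_naples_pf n k s & path_of_pf n s = p.
Proof.
move=> p_path; have prefix_ok := k_lattice_path_prefix p_path.
move: p_path => /and5P [/eqP size_p /eqP east /eqP south starts_south _].
exists (heights n p); last by rewrite /path_of_pf path_aux_heights.
case: p starts_south size_p east south prefix_ok => [|[] p] // _ size_p east south.
rewrite /= add0n add1n in east south *; move=> prefix_ok.
(* The initial south step brings the heights below n + 1 = (n - 1) + 2. *)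
have size_s : size (heights n.-1 p) = n by rewrite size_heights.
have s_bounded : path geq n (heights n.-1 p).
  by rewrite -south; exact: heights_decr.
have s_decr : sorted geq (heights n.-1 p) := path_sorted s_bounded.
have s_range : all (fun a => 0 < a <= n) (heights n.-1 p).
  apply/allP => a a_s; rewrite (allP (heights_pos _ _) a a_s) /=.
  exact: (allP (order_path_min geq_trans s_bounded) a a_s).
rewrite /weakly_decr s_decr /=; apply/(naples_pf_decrE k size_s s_range s_decr).
move=> i i_lt; rewrite -[_ + i]addn0.
by apply: (@heights_bound_of_prefix (false :: p) n 0 (n + k)); rewrite ?size_s.
Qed.

Lemma naples_pf_decr_minE n k s :
  size s = n -> all (fun a => 0 < a <= n) s -> weakly_decr s ->
  is_naples_pf n k s <-> (forall i, i < n -> nth 0 s i <= minn n (n + k - i)).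
Proof.
move=> size_s s_range s_decr; rewrite (naples_pf_decrE k size_s s_range s_decr).
have entry_le i : i < n -> nth 0 s i <= n.
  move=> i_lt; have : nth 0 s i \in s by rewrite mem_nth ?size_s.
  by move=> /(allP s_range) /andP [].
split=> bound i i_lt; have := bound i i_lt; have := entry_le i i_lt;
  rewrite leq_min; lia.
Qed.

Theorem theorem1p3 (n k : nat) (hk1 : 1 <= k) (hkn : k <= n - 1) :
  [/\ (forall s : seq nat, weakly_decr s -> is_naples_pf n k s ->
         is_k_lattice_path n k (path_of_pf n s)),
      (forall s t : seq nat, weakly_decr s -> is_naples_pf n k s ->
         weakly_decr t -> is_naples_pf n k t ->
         path_of_pf n s = path_of_pf n t -> s = t),
      (forall p : seq bool, is_k_lattice_path n k p ->
         exists2 s : seq nat, weakly_decr s && is_naples_pf n k s &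
           path_of_pf n s = p) &
      (forall s : seq nat, size s = n -> all (fun a => 0 < a <= n) s ->
         weakly_decr s ->
         (is_naples_pf n k s <->
          forall i : nat, i < n -> nth 0 s i <= minn n (n + k - i)))].
Proof.
have n_gt0 : 0 < n by lia.
split.
- by move=> s; exact: path_of_pf_k_lattice_path.
- exact: path_of_pf_inj.
- exact: path_of_pf_onto.
- exact: naples_pf_decr_minE.
Qed.
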